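(* Let $q(z)$ be a monic real polynomial of degree $p$ with $q(1)=0$, let $r(z)$ be a polynomial of degree $p-1$, and let $\ell>0$. Then there exist a constant $C_0>0$, depending only on $q$, $r$ and $\ell$, and some $\mu_0\in(0,\ell)$, such that for every $\mu\in(0,\mu_0)$, $$\sup_{\nu\in[\mu,\ell]}\rho\big(q(z)-\nu\, r(z)\big)\ge 1-C_0\frac{\mu}{\ell}.$$
   Context: For a polynomial $s(z)$, $\rho(s)$ denotes the maximum modulus of a (complex) root of $s$. *)

From HB Require Import structures.
From mathcomp Require Import all_boot all_order all_algebra.
From mathcomp Require Import complex.
From mathcomp Require Import all_classical all_reals.
Set Implicit Arguments. Unset Strict Implicit. Unset Printing Implicit Defensive.
Import Order.TTheory GRing.Theory Num.Theory.
Local Open Scope ring_scope.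
Local Open Scope classical_set_scope.

Definition cmod (R : rcfType) (z : R[i]) : R :=
  Num.sqrt (complex.Re z ^+ 2 + complex.Im z ^+ 2).

Definition rho (R : realType) (s : {poly R}) : R :=
  sup [set cmod z | z in [set z : R[i] | root (map_poly (real_complex R) s) z]].

From HB Require Import structures.
From mathcomp Require Import all_boot all_order all_algebra.
From mathcomp Require Import complex.
From mathcomp Require Import all_classical all_reals.
From mathcomp Require Import ring lra.
Import Order.TTheory GRing.Theory Num.Theory.
Local Open Scope ring_scope.
Local Open Scope complex_scope.
Local Open Scope classical_set_scope.
Set Implicit Arguments. Unset Strict Implicit. Unset Printing Implicit Defensive.

(* Let k + 1 be the multiplicity of 1 as a root of q and put f = q - mu r.
   If rho(f) < 1, all roots of f lie in the half-plane Re z <= rho(f), and so do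
   the roots of all its derivatives: at a point x to the right of the roots, the
   logarithmic derivative sum 1/(x - z) has positive real part.  The same sum,
   applied to f^(k) at x = 1, gives
     (1 - rho(f)) |f^(k+1)(1)| <= p |f^(k)(1)|.
   Here f^(k)(1) = -mu r^(k)(1) is O(mu) whereas f^(k+1)(1) stays close to
   q^(k+1)(1) <> 0, hence 1 - rho(f) = O(mu).  Cauchy's bound on the roots,
   uniform in nu in [0, l], keeps the supremum over nu finite. *)

Lemma horner_deriv_prod_XsubC (F : fieldType) (s : seq F) (x : F) : x \notin s ->
  (\prod_(z <- s) ('X - z%:P))^`().[x] =
  (\prod_(z <- s) ('X - z%:P)).[x] * \sum_(z <- s) (x - z)^-1.
Proof.
elim: s => [|a s IHs]; first by rewrite !big_nil derivC horner0 mulr0.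
rewrite inE negb_or => /andP[x_neq_a x_notin_s].
rewrite !big_cons derivM derivXsubC mul1r hornerD !hornerM IHs // hornerXsubC.
have x_sub_a_neq0 : x - a != 0 by rewrite subr_eq0.
by field.
Qed.

Lemma norm_monic_root_le (C : numDomainType) (F : {poly C}) z :
  F \is monic -> root F z -> `|z| <= 1 + \sum_(i < (size F).-1) `|F`_i|.
Proof.
move=> F_monic Fz; have sum_ge0 : 0 <= \sum_(i < (size F).-1) `|F`_i|.
  by rewrite sumr_ge0.
have [z_le1|z_gt1] := real_leP (normr_real z) (@real1 C).
  by rewrite (le_trans z_le1) // lerDl.
apply: ler_wpDl ler01 _; set n := (size F).-1.
have size_F : size F = n.+1 by rewrite prednK // size_poly_gt0 monic_neq0.
move: Fz; rewrite /root horner_coef size_F big_ord_recr /=.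
rewrite -lead_coefE (monicP F_monic) mul1r addrC addr_eq0 => /eqP zn_eq.
case: n zn_eq {size_F sum_ge0} => [|n] zn_eq.
  by move: zn_eq; rewrite big_ord0 expr0 oppr0 => /eqP; rewrite oner_eq0.
have zn_le : `|z| ^+ n.+1 <= (\sum_(i < n.+1) `|F`_i|) * `|z| ^+ n.
  rewrite -normrX zn_eq normrN mulr_suml; apply: le_trans (ler_norm_sum _ _ _) _.
  apply: ler_sum => i _; rewrite normrM normrX ler_wpM2l //.
  by rewrite ler_eXn2l // -ltnS.
by move: zn_le; rewrite exprS ler_pM2r // exprn_gt0 // (lt_trans ltr01).
Qed.

Lemma size_derivn_leq (R : nzRingType) (F : {poly R}) n : (size F^`(n) <= size F)%N.
Proof.
apply/leq_sizeP => i size_le; rewrite coef_derivn nth_default ?mul0rn //.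
exact: leq_trans size_le (leq_addl _ _).
Qed.

Lemma exists_derivn_root_last (R : numDomainType) (F : {poly R}) x :
  F != 0 -> root F x -> exists k, F^`(k).[x] = 0 /\ F^`(k.+1).[x] != 0.
Proof.
move=> F_neq0 Fx; set n := (size F).-1.
have derivn_top : F^`(n) = (lead_coef F *+ n`!)%:P.
  apply/polyP => i; rewrite coef_derivn coefC; case: i => [|i] /=.
    by rewrite addn0 ffactnn lead_coefE.
  by rewrite nth_default ?mul0rn // (leq_trans (leqSpred _)) // addnS ltnS leq_addr.
have : exists j, F^`(j).[x] != 0.
  exists n; rewrite derivn_top hornerC mulrn_eq0 negb_or lead_coef_eq0 F_neq0.
  by rewrite -lt0n fact_gt0.
case/ex_minnP => -[|k]; first by rewrite derivn0 (rootP Fx) eqxx.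
move=> Fk1x k_min; exists k; split => //; apply/eqP.
by apply/negPn/negP => /k_min; rewrite ltnn.
Qed.

Section ComplexModulus.
Variable R : rcfType.
Implicit Types (a : R) (z w : R[i]).

Lemma cmodE z : `|z| = (cmod z)%:C.
Proof. by rewrite normc_def. Qed.

Lemma cmod_ge0 z : 0 <= cmod z.
Proof. exact: sqrtr_ge0. Qed.

Lemma cmodR a : cmod a%:C = `|a|.
Proof. by rewrite /cmod /= expr0n /= addr0 sqrtr_sqr. Qed.

Lemma cmodM z w : cmod (z * w) = cmod z * cmod w.
Proof. by apply: complexI; rewrite rmorphM /= -!cmodE normrM. Qed.

Lemma cmodV z : cmod z^-1 = (cmod z)^-1.
Proof. by apply: complexI; rewrite fmorphV /= -!cmodE normfV. Qed.

Lemma ler_cmod_sum (I : Type) (s : seq I) (F : I -> R[i]) :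
  cmod (\sum_(i <- s) F i) <= \sum_(i <- s) cmod (F i).
Proof.
rewrite -lecR rmorph_sum -cmodE (eq_bigr _ (fun i _ => esym (cmodE (F i)))).
exact: ler_norm_sum.
Qed.

Lemma Re_le_cmod z : complex.Re z <= cmod z.
Proof.
apply: le_trans (ler_norm _) _; rewrite -sqrtr_sqr ler_sqrt ?addr_ge0 ?sqr_ge0 //.
by rewrite lerDl sqr_ge0.
Qed.

Lemma ReD z w : complex.Re (z + w) = complex.Re z + complex.Re w.
Proof. by case: z; case: w. Qed.

Lemma ReB z w : complex.Re (z - w) = complex.Re z - complex.Re w.
Proof. by case: z; case: w. Qed.

Lemma Re_sum (I : Type) (s : seq I) (F : I -> R[i]) :
  complex.Re (\sum_(i <- s) F i) = \sum_(i <- s) complex.Re (F i).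
Proof. exact: (big_morph _ ReD). Qed.

Lemma ReV_gt0 z : 0 < complex.Re z -> 0 < complex.Re z^-1.
Proof. by case: z => a b /= a_gt0; rewrite divr_gt0 // ltr_wpDr ?sqr_ge0 ?exprn_gt0. Qed.

End ComplexModulus.

Section HalfPlane.
Variable R : rcfType.
Implicit Types (c : R) (x z : R[i]) (F : {poly R[i]}) (rs : seq R[i]).

(* The zero polynomial is excluded since every point is one of its roots. *)
Definition roots_Re_le c F := F != 0 -> forall x, root F x -> complex.Re x <= c.

Lemma roots_Re_le_factor c F : roots_Re_le c F -> F != 0 ->
  exists2 rs, F = lead_coef F *: \prod_(z <- rs) ('X - z%:P)
            & {in rs, forall z, complex.Re z <= c}.
Proof.
move=> F_Re F_neq0; have [rs F_eq] := closed_field_poly_normal F.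
exists rs => // z z_rs; apply: F_Re => //.
by rewrite F_eq rootZ ?lead_coef_eq0 // root_prod_XsubC.
Qed.

Lemma Re_sum_inv_sub_gt0 c rs x : rs != [::] ->
  {in rs, forall z, complex.Re z <= c} -> c < complex.Re x ->
  0 < complex.Re (\sum_(z <- rs) (x - z)^-1).
Proof.
case: rs => // a rs _ rs_Re x_Re.
have Re_inv_gt0 z : z \in a :: rs -> 0 < complex.Re (x - z)^-1.
  by move=> z_rs; rewrite ReV_gt0 // ReB subr_gt0 (le_lt_trans (rs_Re z z_rs)).
rewrite Re_sum big_cons ltr_pwDl ?Re_inv_gt0 ?mem_head // big_seq sumr_ge0 // => z z_rs.
by rewrite ltW // Re_inv_gt0 // in_cons z_rs orbT.
Qed.

Lemma cmod_sum_inv_sub_le c rs x :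
  {in rs, forall z, complex.Re z <= c} -> c < complex.Re x ->
  cmod (\sum_(z <- rs) (x - z)^-1) <= (size rs)%:R / (complex.Re x - c).
Proof.
move=> rs_Re x_Re; have gap_gt0 : 0 < complex.Re x - c by rewrite subr_gt0.
apply: le_trans (ler_cmod_sum _ _) _.
rewrite -sum1_size natr_sum mulr_suml big_seq [leRHS]big_seq; apply: ler_sum => z z_rs.
have gap_le : complex.Re x - c <= cmod (x - z).
  by apply: le_trans (Re_le_cmod _); rewrite ReB lerD2l lerN2 rs_Re.
by rewrite mul1r cmodV lef_pV2 ?posrE // (lt_le_trans gap_gt0).
Qed.

Lemma roots_Re_le_deriv c F : roots_Re_le c F -> roots_Re_le c F^`().
Proof.
move=> F_Re F'_neq0 x F'x; rewrite leNgt; apply/negP => x_Re.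
have F_neq0 : F != 0 by apply: contraNneq F'_neq0 => ->; rewrite deriv0.
have [rs F_eq rs_Re] := roots_Re_le_factor F_Re F_neq0.
have x_notin_rs : x \notin rs.
  by apply/negP => /rs_Re; rewrite leNgt x_Re.
have rs_neq0 : rs != [::].
  by apply: contraNneq F'_neq0 => rs0; rewrite F_eq rs0 big_nil derivZ derivC scaler0.
have Fx_neq0 : F.[x] != 0.
  by apply/negP => /(F_Re F_neq0); rewrite leNgt x_Re.
move: F'x; rewrite /root F_eq derivZ !hornerZ horner_deriv_prod_XsubC //.
rewrite mulrA -hornerZ -F_eq mulf_eq0 (negbTE Fx_neq0) /= => /eqP S0.
by have := Re_sum_inv_sub_gt0 rs_neq0 rs_Re x_Re; rewrite S0 ltxx.
Qed.

Lemma roots_Re_le_derivn c F n : roots_Re_le c F -> roots_Re_le c F^`(n).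
Proof.
move=> F_Re; elim: n => [|n IHn]; rewrite ?derivn0 // derivnS.
exact: roots_Re_le_deriv.
Qed.

Lemma cmod_horner_deriv_le c F x : roots_Re_le c F -> c < complex.Re x ->
  cmod F^`().[x] <= cmod F.[x] * ((size F).-1%:R / (complex.Re x - c)).
Proof.
move=> F_Re x_Re; have [->|F_neq0] := eqVneq F 0.
  by rewrite deriv0 horner0 -(rmorph0 (real_complex R)) cmodR normr0 mul0r.
have [rs F_eq rs_Re] := roots_Re_le_factor F_Re F_neq0.
have x_notin_rs : x \notin rs.
  by apply/negP => /rs_Re; rewrite leNgt x_Re.
have -> : (size F).-1 = size rs.
  by rewrite F_eq size_scale ?lead_coef_eq0 // size_prod_XsubC.
rewrite F_eq derivZ !hornerZ horner_deriv_prod_XsubC // mulrA cmodM.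
by rewrite ler_wpM2l ?cmod_ge0 ?cmod_sum_inv_sub_le.
Qed.

End HalfPlane.

Section RootRadius.
Variable R : realType.
Implicit Types (f : {poly R}) (z : R[i]).
Local Notation "f ^C" := (map_poly (real_complex R) f).

Lemma cmod_monic_root_le f z : f \is monic -> root f^C z ->
  cmod z <= 1 + \sum_(i < (size f).-1) `|f`_i|.
Proof.
move=> f_monic fz; rewrite -lecR -cmodE rmorphD rmorph1 rmorph_sum.
have := norm_monic_root_le (etrans (map_monic _ _) f_monic) fz; rewrite size_map_poly.
by under eq_bigr do rewrite coef_map /= cmodE cmodR.
Qed.

Lemma rho_le f B : 0 <= B -> (forall z, root f^C z -> cmod z <= B) -> rho f <= B.
Proof.
move=> B_ge0 roots_le; have [[_ [z fz _]]|no_roots] := pselect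
  ([set cmod z | z in [set z | root f^C z]] !=set0).
  by apply: ge_sup => [|_ [w fw <-]]; [exists (cmod z), z | exact: roots_le].
by rewrite /rho sup_out // => -[].
Qed.

Lemma cmod_le_rho f z : f \is monic -> root f^C z -> cmod z <= rho f.
Proof.
move=> f_monic fz; apply: sup_upper_bound; last by exists z.
split; first by exists (cmod z), z.
by exists (1 + \sum_(i < (size f).-1) `|f`_i|) => _ [w fw <-]; exact: cmod_monic_root_le.
Qed.

Lemma roots_Re_le_rho f : f \is monic -> roots_Re_le (rho f) f^C.
Proof. by move=> f_monic _ z fz; rewrite (le_trans (Re_le_cmod z)) ?cmod_le_rho. Qed.

Lemma one_sub_rho_derivn_le f k : f \is monic -> rho f < 1 ->
  (1 - rho f) * `|f^`(k.+1).[1]| <= (size f).-1%:R * `|f^`(k).[1]|.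
Proof.
move=> f_monic rho_lt1; have gap_gt0 : 0 < 1 - rho f by rewrite subr_gt0.
have horner1 j : (f^C)^`(j).[1] = (f^`(j).[1])%:C.
  by rewrite derivn_map -(rmorph1 (real_complex R)) horner_map.
have derivn_Re := roots_Re_le_derivn (n := k) (roots_Re_le_rho f_monic).
have := cmod_horner_deriv_le derivn_Re (x := 1) rho_lt1.
rewrite -derivnS !horner1 !cmodR mulrCA mulrA ler_pdivlMr // mulrC => le_deriv.
apply: le_trans le_deriv _; rewrite ler_wpM2r // ler_nat derivn_map size_map_poly.
by rewrite -!subn1 leq_sub2r ?size_derivn_leq.
Qed.

End RootRadius.

Section Perturbation.
Variables (R : realType) (p : nat) (q r : {poly R}).
Hypotheses (q_monic : q \is monic) (size_q : size q = p.+1) (size_r : size r = p).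

Lemma size_perturb (nu : R) : size (q - nu *: r) = p.+1.
Proof.
by rewrite size_polyDl size_q // size_polyN ltnS (leq_trans (size_scale_leq _ _)) ?size_r.
Qed.

Lemma monic_perturb (nu : R) : q - nu *: r \is monic.
Proof.
rewrite monicE lead_coefDl ?(monicP q_monic) // size_polyN size_q ltnS.
by rewrite (leq_trans (size_scale_leq _ _)) ?size_r.
Qed.

Lemma rho_perturb_le (l nu : R) : 0 <= nu <= l ->
  rho (q - nu *: r) <= 1 + \sum_(i < p) (`|q`_i| + l * `|r`_i|).
Proof.
case/andP=> nu_ge0 nu_le_l; apply: rho_le => [|z qz].
  rewrite addr_ge0 // sumr_ge0 // => i _.
  by rewrite addr_ge0 ?mulr_ge0 // (le_trans nu_ge0).
apply: le_trans (cmod_monic_root_le (monic_perturb nu) qz) _.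
rewrite size_perturb lerD2l ler_sum // => i _; rewrite coefB coefZ.
apply: le_trans (ler_normB _ _) _; rewrite lerD2l normrM ger0_norm //.
by rewrite ler_wpM2r.
Qed.

Lemma one_sub_rho_perturb_le k (mu : R) : q^`(k).[1] = 0 -> 0 < mu ->
  2 * mu * `|r^`(k.+1).[1]| <= `|q^`(k.+1).[1]| ->
  (1 - rho (q - mu *: r)) * `|q^`(k.+1).[1]| <= 2 * mu * p%:R * `|r^`(k).[1]|.
Proof.
move=> qk1 mu_gt0; set A := `|q^`(k.+1).[1]|; set B := `|r^`(k.+1).[1]| => small_mu.
have [rho_ge1|rho_lt1] := leP 1 (rho (q - mu *: r)).
  have lhs_le0 : (1 - rho (q - mu *: r)) * A <= 0.
    by apply: mulr_le0_ge0; rewrite ?subr_le0 ?normr_ge0.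
  by apply: le_trans lhs_le0 _; rewrite !mulr_ge0 ?ler0n ?(ltW mu_gt0).
have gap_gt0 : 0 < 1 - rho (q - mu *: r) by rewrite subr_gt0.
have := one_sub_rho_derivn_le k (monic_perturb mu) rho_lt1.
rewrite size_perturb !derivnB !derivnZ !hornerE qk1 sub0r normrN normrM.
rewrite (gtr0_norm mu_gt0); set H := `|_ - _| => key.
have half_le : A / 2 <= H.
  have := lerB_dist (q^`(k.+1).[1]) (mu * r^`(k.+1).[1]).
  by rewrite normrM gtr0_norm // -/A -/B -/H; lra.
have := ler_wpM2l (ltW gap_gt0) half_le; lra.
Qed.

Lemma rho_perturb_le_sup (mu l : R) : 0 < mu -> mu <= l ->
  rho (q - mu *: r) <= sup [set rho (q - nu *: r) | nu in [set nu : R | mu <= nu <= l]].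
Proof.
move=> mu_gt0 mu_le_l; apply: sup_upper_bound; last by exists mu; rewrite //= lexx.
split; first by exists (rho (q - mu *: r)), mu; rewrite //= lexx.
exists (1 + \sum_(i < p) (`|q`_i| + l * `|r`_i|)) => _ [nu /andP[mu_le_nu nu_le_l] <-].
by apply: rho_perturb_le; rewrite nu_le_l (le_trans (ltW mu_gt0)).
Qed.

End Perturbation.

Theorem proposition8 (R : realType) (p : nat) (q r : {poly R}) (l : R) :
  q \is monic -> size q = p.+1 -> q.[1] = 0 ->
  size r = p -> 0 < l ->
  exists C0 : R, exists mu0 : R,
    0 < C0 /\ 0 < mu0 < l /\
    forall mu : R, 0 < mu < mu0 ->
      sup [set rho (q - nu *: r) | nu in [set nu : R | mu <= nu <= l]]
        >= 1 - C0 * (mu / l).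
Proof.
move=> q_monic size_q q1 size_r l_gt0.
have q_root1 : root q 1 by apply/rootP.
have [k [qk1 qk1_neq0]] := exists_derivn_root_last (monic_neq0 q_monic) q_root1.
set A := `|q^`(k.+1).[1]|; set B := `|r^`(k.+1).[1]|; set D := `|r^`(k).[1]|.
have A_gt0 : 0 < A by rewrite normr_gt0.
set K := 2 * p%:R * D / A.
have K_ge0 : 0 <= K by rewrite /K /D /A !mulr_ge0 ?ler0n ?invr_ge0 ?normr_ge0.
exists (l * (K + 1)), (Num.min (l / 2) (A / (2 * (B + 1)))).
have B_ge0 : 0 <= B by rewrite normr_ge0.
have l2_lt_l : l / 2 < l by rewrite ltr_pdivrMr // ltr_pMr // ltr1n.
split; first by rewrite mulr_gt0 // ltr_wpDl.
split; first by rewrite lt_min !divr_gt0 ?mulr_gt0 ?ltr_wpDl //= gt_min l2_lt_l.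
move=> mu /andP[mu_gt0]; rewrite lt_min => /andP[mu_lt_l2 mu_lt_A].
have mu_le_l : mu <= l by rewrite ltW // (lt_trans mu_lt_l2).
have small_mu : 2 * mu * B <= A.
  by move: mu_lt_A; rewrite ltr_pdivlMr ?mulr_gt0 ?ltr_wpDl //; lra.
have rho_mu : (1 - rho (q - mu *: r)) * A <= 2 * mu * p%:R * D :=
  one_sub_rho_perturb_le q_monic size_q size_r qk1 mu_gt0 small_mu.
have sup_ge := rho_perturb_le_sup q_monic size_q size_r mu_gt0 mu_le_l.
have -> : l * (K + 1) * (mu / l) = (K + 1) * mu by field; rewrite gt_eqF.
have : 1 - rho (q - mu *: r) <= K * mu.
  by rewrite /K mulrAC ler_pdivlMr // mulrC; lra.
lra.
Qed.
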